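(* Let $\mathcal{U}\subseteq\mathbb{R}^n$ be a domain and $F=u\,\phi(r,s)$ a spherically symmetric Finsler metric on $\mathcal{U}$, where $u=|y|$, $r=|x|$, $s=\langle x,y\rangle/|y|$ and $\phi$ is smooth. Then the Cartan torsion of $F$ can be written as $$C_{ijk}=\frac{\mathcal{P}}{n+1}\big\{h_{ij}I_k+h_{jk}I_i+h_{ki}I_j\big\}+\frac{\mathcal{Q}}{\|\mathbf{I}\|^2}I_iI_jI_k,$$ where $$\mathcal{P}=\frac{(n+1)\big[(\phi-s\phi_s)\phi_s-s\phi\phi_{ss}\big]\big[\phi-s\phi_s+(r^2-s^2)\phi_{ss}\big]}{(n+1)\big[(\phi-s\phi_s)\phi_s-s\phi\phi_{ss}\big]\big[\phi-s\phi_s+(r^2-s^2)\phi_{ss}\big]+(r^2-s^2)\big[(\phi-s\phi_s)\phi_{sss}+3s\phi_{ss}^2\big]\phi},$$ $$\mathcal{Q}=\frac{(r^2-s^2)\big[(\phi-s\phi_s)\phi_{sss}+3s\phi_{ss}^2\big]\phi^2}{(n+1)\big[(\phi-s\phi_s)\phi_s-s\phi\phi_{ss}\big]\big[\phi-s\phi_s+(r^2-s^2)\phi_{ss}\big]\phi+(r^2-s^2)\big[(\phi-s\phi_s)\phi_{sss}+3s\phi_{ss}^2\big]\phi^2}.$$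
   Context: Here $|\cdot|$, $\langle\cdot,\cdot\rangle$ are the Euclidean norm and inner product; subscripts $s$ denote partial derivatives in $s$. For a Finsler metric $F$: $g_{ij}=\tfrac12(F^2)_{y^iy^j}$, $(g^{ij})$ its inverse, $C_{ijk}=\tfrac12\partial g_{ij}/\partial y^k$ the Cartan torsion, $I_i=g^{jk}C_{ijk}$ the mean Cartan torsion, $\|\mathbf{I}\|^2=g^{ij}I_iI_j$, and $h_{ij}=g_{ij}-F_{y^i}F_{y^j}$ the angular metric. *)

From HB Require Import structures.
From mathcomp Require Import all_boot all_order all_algebra.
From mathcomp Require Import all_classical all_reals all_analysis.
Set Implicit Arguments. Unset Strict Implicit. Unset Printing Implicit Defensive.
Import Order.TTheory GRing.Theory Num.Theory.
Import numFieldNormedType.Exports.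
Local Open Scope classical_set_scope.
Local Open Scope ring_scope.

Section Defs.
Variable R : realType.

Fixpoint Dseq {V : normedModType R} (vs : seq V) (f : V -> R) : V -> R :=
  match vs with
  | [::] => f
  | v :: vs' => fun a => 'D_v (Dseq vs' f) a
  end.

Definition smooth_on {V : normedModType R} (W : set V) (f : V -> R) : Prop :=
  forall (vs : seq V) (a : V), W a -> differentiable (Dseq vs f) a.

Variable n : nat.

Definition edot (x y : 'rV[R]_n) : R := \sum_(i < n) x 0 i * y 0 i.
Definition enorm (x : 'rV[R]_n) : R := Num.sqrt (edot x x).

Definition ebasis (i : 'I_n) : 'rV[R]_n := \row_(j < n) (i == j)%:R.

Definition pd (f : 'rV[R]_n -> R) (i : 'I_n) (y : 'rV[R]_n) : R :=
  'D_(ebasis i) f y.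

Definition sph_metric (phi : R * R -> R) (x y : 'rV[R]_n) : R :=
  enorm y * phi (enorm x, edot x y / enorm y).

Section FinslerQuantities.
Variable F : 'rV[R]_n -> 'rV[R]_n -> R.

Definition fund (x y : 'rV[R]_n) (i j : 'I_n) : R :=
  2^-1 * pd (fun z => pd (fun w => F x w ^+ 2) i z) j y.

Definition cartan (x y : 'rV[R]_n) (i j k : 'I_n) : R :=
  2^-1 * pd (fun z => fund x z i j) k y.

Definition fund_inv (x y : 'rV[R]_n) : 'M[R]_n :=
  invmx (\matrix_(i < n, j < n) fund x y i j).

Definition mean_cartan (x y : 'rV[R]_n) (i : 'I_n) : R :=
  \sum_(j < n) \sum_(k < n) fund_inv x y j k * cartan x y i j k.

Definition mean_cartan_norm2 (x y : 'rV[R]_n) : R :=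
  \sum_(i < n) \sum_(j < n)
     fund_inv x y i j * mean_cartan x y i * mean_cartan x y j.

Definition angular (x y : 'rV[R]_n) (i j : 'I_n) : R :=
  fund x y i j - pd (F x) i y * pd (F x) j y.

Definition finsler_on (U : set 'rV[R]_n) : Prop :=
  smooth_on [set p : 'rV[R]_n * 'rV[R]_n | U p.1 /\ p.2 != 0]
            (fun p => F p.1 p.2)
  /\ (forall x y, U x -> y != 0 -> 0 < F x y)
  /\ (forall x y (l : R), U x -> 0 < l -> F x (l *: y) = l * F x y)
  /\ (forall x y (v : 'rV[R]_n), U x -> y != 0 -> v != 0 ->
        0 < \sum_(i < n) \sum_(j < n) fund x y i j * v 0 i * v 0 j).

End FinslerQuantities.

Definition phi_s (phi : R * R -> R) (p : R * R) : R := 'D_((0 : R), (1 : R)) phi p.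
Definition phi_ss (phi : R * R -> R) (p : R * R) : R :=
  'D_((0 : R), (1 : R)) (phi_s phi) p.
Definition phi_sss (phi : R * R -> R) (p : R * R) : R :=
  'D_((0 : R), (1 : R)) (phi_ss phi) p.

Definition coefA (phi : R * R -> R) (r s : R) : R :=
  let p := (r, s) in
  (phi p - s * phi_s phi p) * phi_s phi p - s * phi p * phi_ss phi p.
Definition coefB (phi : R * R -> R) (r s : R) : R :=
  let p := (r, s) in
  phi p - s * phi_s phi p + (r ^+ 2 - s ^+ 2) * phi_ss phi p.
Definition coefE (phi : R * R -> R) (r s : R) : R :=
  let p := (r, s) in
  (phi p - s * phi_s phi p) * phi_sss phi p + 3%:R * s * phi_ss phi p ^+ 2.

Definition coefP (phi : R * R -> R) (r s : R) : R :=
  (n.+1%:R * coefA phi r s * coefB phi r s) /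
  (n.+1%:R * coefA phi r s * coefB phi r s
   + (r ^+ 2 - s ^+ 2) * coefE phi r s * phi (r, s)).

Definition coefQ (phi : R * R -> R) (r s : R) : R :=
  ((r ^+ 2 - s ^+ 2) * coefE phi r s * phi (r, s) ^+ 2) /
  (n.+1%:R * coefA phi r s * coefB phi r s * phi (r, s)
   + (r ^+ 2 - s ^+ 2) * coefE phi r s * phi (r, s) ^+ 2).

End Defs.

From HB Require Import structures.
From mathcomp Require Import all_boot all_order all_algebra.
From mathcomp Require Import all_classical all_reals all_analysis.
Import Order.TTheory GRing.Theory Num.Theory.
Import numFieldNormedType.Exports.
Local Open Scope classical_set_scope.
Local Open Scope ring_scope.
From mathcomp Require Import ring lra.

(* Fix x and a direction y, and let l = y/|y|, s = <x, l>, w = x - s l.  Direct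
   differentiation gives g = F_y F_y^T + phi ((phi - s phi_s) (1 - l l^T) + phi_ss w w^T),
   and C is a combination of the symmetrisations of (1 - l l^T) (x) w and of
   w (x) w (x) w.  Since g l = phi F_y and g w = phi B w + phi_s |w|^2 F_y, the inverse
   of g is explicit on F_y and w; hence I = lambda w, where lambda is read off from
   tr(g^-1 g) = n, and ||I||^2 = lambda^2 w^T g^-1 w.  The decomposition is then a
   rational identity, valid as soon as phi, B and phi - s phi_s are nonzero.
   Positive definiteness of g gives phi > 0, and B > 0 when w != 0 (which holds
   because I != 0).  Finally phi - s phi_s is positive at s = +-r (test g on a vector
   orthogonal to y = x) and at every interior critical point, where its derivative
   -s phi_ss vanishes and it equals phi (s = 0) or B (phi_ss = 0); by the extreme
   value theorem it is positive on [-r, r]. *)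

Set Implicit Arguments. Unset Strict Implicit. Unset Printing Implicit Defensive.

(** * Linear algebra *)

Section DotProduct.
Variables (R : comPzRingType) (n : nat).
Implicit Types (a b c : 'rV[R]_n) (k : R).

Definition dotv a b : R := \sum_(i < n) a 0 i * b 0 i.

Lemma dotvC a b : dotv a b = dotv b a.
Proof. by apply: eq_bigr => i _; rewrite mulrC. Qed.

Lemma dotvDl a b c : dotv (a + b) c = dotv a c + dotv b c.
Proof. by rewrite -big_split; apply: eq_bigr => i _; rewrite mxE mulrDl. Qed.

Lemma dotvZl k a b : dotv (k *: a) b = k * dotv a b.
Proof. by rewrite mulr_sumr; apply: eq_bigr => i _; rewrite mxE mulrA. Qed.

Lemma dotvBl a b c : dotv (a - b) c = dotv a c - dotv b c.
Proof. by rewrite dotvDl -scaleN1r dotvZl mulN1r. Qed.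

Lemma dotvDr a b c : dotv a (b + c) = dotv a b + dotv a c.
Proof. by rewrite !(dotvC a) dotvDl. Qed.

Lemma dotvZr k a b : dotv a (k *: b) = k * dotv a b.
Proof. by rewrite !(dotvC a) dotvZl. Qed.

Lemma dotvBr a b c : dotv a (b - c) = dotv a b - dotv a c.
Proof. by rewrite !(dotvC a) dotvBl. Qed.

Lemma dotv0r a : dotv a 0 = 0.
Proof. by rewrite /dotv big1 // => i _; rewrite mxE mulr0. Qed.

Lemma mul_row_tr a b : a *m b^T = (dotv a b)%:M.
Proof.
by apply/matrixP => i j; rewrite !ord1 !mxE eqxx mulr1n; apply: eq_bigr => k _; rewrite mxE.
Qed.

Lemma mul_row_tr00 a b : (a *m b^T) 0 0 = dotv a b.
Proof. by rewrite mul_row_tr mxE eqxx mulr1n. Qed.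

End DotProduct.

Lemma dotv_orth_proj (F : fieldType) n (a b : 'rV[F]_n) : dotv a a != 0 ->
  let e := b - (dotv a b / dotv a a) *: a in
  dotv a e = 0 /\ dotv e e = dotv b b - dotv a b ^+ 2 / dotv a a.
Proof.
move=> aa e; have ae : dotv a e = 0 by rewrite dotvBr dotvZr mulfVK ?subrr.
split=> //; rewrite {1}/e dotvBl dotvZl ae dotvBr dotvZr (dotvC b a).
by field.
Qed.

Section DotvReal.
Variables (R : realDomainType) (n : nat).
Implicit Types v : 'rV[R]_n.

Lemma dotv_ge0 v : 0 <= dotv v v.
Proof. by apply: sumr_ge0 => i _; rewrite -expr2 sqr_ge0. Qed.

Lemma dotv_eq0 v : (dotv v v == 0) = (v == 0).
Proof.
apply/idP/eqP => [|->]; last by rewrite /dotv big1 // => i _; rewrite mxE mul0r.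
rewrite psumr_eq0 => [/allP v0|i _]; last by rewrite -expr2 sqr_ge0.
apply/rowP => i; have := v0 i (mem_index_enum i).
by rewrite mxE implyTb mulf_eq0 orbb => /eqP.
Qed.

Lemma dotv_gt0 v : v != 0 -> 0 < dotv v v.
Proof. by rewrite lt_def dotv_eq0 dotv_ge0 andbT. Qed.

End DotvReal.

Section QuadraticForm.
Variables (R : comPzRingType) (n : nat).

Definition qform (G : 'M[R]_n) (v : 'rV[R]_n) : R := (v *m G *m v^T) 0 0.

Lemma qformE G v : qform G v = \sum_(i < n) \sum_(j < n) G i j * v 0 i * v 0 j.
Proof.
rewrite /qform mxE [RHS]exchange_big; apply: eq_bigr => j _.
by rewrite !mxE mulr_suml; apply: eq_bigr => i _; rewrite [v 0 i * _]mulrC.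
Qed.

End QuadraticForm.

Lemma qform_neq0_unitmx (F : fieldType) n (G : 'M[F]_n) :
  (forall v, v != 0 -> qform G v != 0) -> G \in unitmx.
Proof.
move=> pdG; rewrite unitmxE unitfE; apply/negP => /det0P [v /pdG].
by rewrite /qform => + vG0; rewrite vG0 mul0mx mxE eqxx.
Qed.

Section Contraction.
Variables (R : comPzRingType) (n : nat) (N A : 'M[R]_n) (b : 'rV[R]_n).

Lemma contract_mx_row i :
  \sum_(j < n) \sum_(k < n) N j k * (A i j * b 0 k) = (A *m (N *m b^T)) i 0.
Proof.
rewrite mxE; apply: eq_bigr => j _; rewrite mxE mulr_sumr.
by apply: eq_bigr => k _; rewrite !mxE mulrCA.
Qed.

Lemma contract_mx : \sum_(j < n) \sum_(k < n) N j k * A j k = \tr (N *m A^T).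
Proof.
by apply: eq_bigr => j _; rewrite mxE; apply: eq_bigr => k _; rewrite !mxE.
Qed.

End Contraction.

(** * The tensors of a spherically symmetric metric *)

(* Closed forms of the Finsler quantities of |y| phi(r, s) at a direction y, in
   terms of l = y/|y|, u = |y|, s = <x, l> and p_m = (d/ds)^m phi(r, s):
   [xorth] is w, [dF] is F_y, [fund_mx] is g, [angular_mx] is h, [cartan_t] is C,
   and [cA], [cB], [cE] are [coefA], [coefB], [coefE] with r^2 - s^2 = [xorth2]. *)
Section SphericalTensors.
Variables (R : numFieldType) (n : nat) (l x : 'rV[R]_n) (s u p0 p1 p2 p3 : R).

Definition xorth := x - s *: l.
Definition xorth2 := dotv xorth xorth.
Definition dF := p0 *: l + p1 *: xorth.
Definition kap := p0 - s * p1.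
Definition cA := kap * p1 - s * p0 * p2.
Definition cB := kap + xorth2 * p2.
Definition cE := kap * p3 + 3 * s * p2 ^+ 2.
Definition cG := 3 * p1 * p2 + p0 * p3.
Definition cD := n.+1%:R * cA * cB + xorth2 * cE * p0.
Definition cP := n.+1%:R * cA * cB / (n.+1%:R * cA * cB + xorth2 * cE * p0).
Definition cQ :=
  xorth2 * cE * p0 ^+ 2 / (n.+1%:R * cA * cB * p0 + xorth2 * cE * p0 ^+ 2).

Definition proj_mx : 'M[R]_n := 1%:M - l^T *m l.
Definition angular_mx := p0 *: (kap *: proj_mx + p2 *: (xorth^T *m xorth)).
Definition fund_mx := dF^T *m dF + angular_mx.
Definition cartan_t (i j k : 'I_n) :=
  (cA * (proj_mx i j * xorth 0 k + proj_mx j k * xorth 0 i + proj_mx k i * xorth 0 j)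
   + cG * (xorth 0 i * xorth 0 j * xorth 0 k)) / (2 * u).

Definition fund_inv_mx := invmx fund_mx.
Definition mcartan i := \sum_(j < n) \sum_(k < n) fund_inv_mx j k * cartan_t i j k.
Definition mcartan_norm2 :=
  \sum_(i < n) \sum_(j < n) fund_inv_mx i j * mcartan i * mcartan j.

Definition xorth_ginv2 := xorth2 / (p0 * cB).
Definition mcartan_scale :=
  (cA * (2 / (p0 * cB) + \tr (fund_inv_mx *m proj_mx)) + cG * xorth_ginv2) / (2 * u).

Lemma proj_mxE i j : proj_mx i j = (i == j)%:R - l 0 i * l 0 j.
Proof. by rewrite !mxE big_ord1 !mxE. Qed.

Lemma proj_mxC i j : proj_mx i j = proj_mx j i.
Proof. by rewrite !proj_mxE eq_sym mulrC. Qed.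

Lemma tr_proj_mx : proj_mx^T = proj_mx.
Proof. by apply/matrixP => i j; rewrite mxE proj_mxC. Qed.

Lemma angular_mxE i j :
  angular_mx i j = p0 * (kap * proj_mx i j + p2 * (xorth 0 i * xorth 0 j)).
Proof. by rewrite !mxE !big_ord1 !mxE. Qed.

Lemma fund_mxE i j : fund_mx i j = dF 0 i * dF 0 j + angular_mx i j.
Proof. by rewrite [LHS]mxE [X in X + _]mxE big_ord1 !mxE. Qed.

Lemma tr_fund_mx : fund_mx^T = fund_mx.
Proof. by apply/matrixP => i j; rewrite mxE !fund_mxE !angular_mxE proj_mxC; ring. Qed.

Lemma fund_mx_mul z : fund_mx *m z^T =
  dotv dF z *: dF^T
  + p0 *: (kap *: (z^T - dotv l z *: l^T) + p2 *: (dotv xorth z *: xorth^T)).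
Proof.
rewrite /fund_mx /angular_mx /proj_mx mulmxDl -scalemxAl mulmxDl -!scalemxAl.
rewrite mulmxBl mul1mx.
by rewrite -!mulmxA !mul_row_tr !mul_mx_scalar.
Qed.

Lemma qform_fund_mx z : qform fund_mx z =
  dotv dF z ^+ 2 + p0 * (kap * (dotv z z - dotv l z ^+ 2) + p2 * dotv xorth z ^+ 2).
Proof.
rewrite /qform -mulmxA fund_mx_mul !(mulmxDr, mulmxN, =^~ scalemxAr) !mul_row_tr.
by rewrite !mxE eqxx !mulr1n !(dotvC z); ring.
Qed.

Lemma mcartan_norm2_xorth0 : xorth = 0 -> mcartan_norm2 = 0.
Proof.
move=> w0; have I0 i : mcartan i = 0.
  rewrite /mcartan big1 // => j _; rewrite big1 // => k _.
  by rewrite /cartan_t w0 !mxE; ring.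
by rewrite /mcartan_norm2 big1 // => i _; rewrite big1 // => j _; rewrite I0 mulr0 mul0r.
Qed.

Hypotheses (l_unit : dotv l l = 1) (xl : dotv x l = s).

Lemma dotv_xorth_l : dotv xorth l = 0.
Proof. by rewrite dotvBl dotvZl xl l_unit mulr1 subrr. Qed.

Lemma dotv_dF_l : dotv dF l = p0.
Proof. by rewrite dotvDl !dotvZl dotv_xorth_l l_unit; ring. Qed.

Lemma dotv_dF_xorth : dotv dF xorth = p1 * xorth2.
Proof. by rewrite dotvDl !dotvZl dotvC dotv_xorth_l; rewrite /xorth2; ring. Qed.

Lemma xorth2E : xorth2 = dotv x x - s ^+ 2.
Proof.
rewrite /xorth2 {1}/xorth dotvBl dotvZl (dotvC l) dotv_xorth_l /xorth dotvBr dotvZr xl.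
ring.
Qed.

Lemma fund_mx_l : fund_mx *m l^T = p0 *: dF^T.
Proof.
rewrite fund_mx_mul dotv_dF_l l_unit dotv_xorth_l scale1r subrr.
by rewrite !(scale0r, scaler0, addr0).
Qed.

Lemma fund_mx_xorth : fund_mx *m xorth^T = (p1 * xorth2) *: dF^T + (p0 * cB) *: xorth^T.
Proof.
rewrite fund_mx_mul dotv_dF_xorth (dotvC l) dotv_xorth_l scale0r subr0 -/xorth2.
by rewrite /cB !scalerA -!scalerDl scalerA (mulrC xorth2).
Qed.

Lemma proj_mx_l : proj_mx *m l^T = 0.
Proof.
by rewrite /proj_mx mulmxBl mul1mx -mulmxA mul_row_tr l_unit mul_mx_scalar scale1r subrr.
Qed.

Lemma proj_mx_xorth : proj_mx *m xorth^T = xorth^T.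
Proof.
rewrite /proj_mx mulmxBl mul1mx -mulmxA mul_row_tr dotvC dotv_xorth_l.
by rewrite mul_mx_scalar scale0r subr0.
Qed.

Hypotheses (fund_unit : fund_mx \in unitmx) (p0_neq0 : p0 != 0) (cB_neq0 : cB != 0).

Lemma tr_fund_inv_mx : fund_inv_mx^T = fund_inv_mx.
Proof. by rewrite /fund_inv_mx trmx_inv tr_fund_mx. Qed.

Lemma fund_inv_dF : fund_inv_mx *m dF^T = p0^-1 *: l^T.
Proof.
by rewrite -[l^T](mulKmx fund_unit) fund_mx_l -scalemxAr scalerA mulVf ?scale1r.
Qed.

Lemma fund_inv_xorth :
  fund_inv_mx *m xorth^T = (p0 * cB)^-1 *: (xorth^T - (p1 * xorth2 / p0) *: l^T).
Proof.
have := mulKmx fund_unit (xorth^T).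
rewrite fund_mx_xorth mulmxDr -!scalemxAr -/fund_inv_mx fund_inv_dF scalerA => {2}<-.
by rewrite addrAC subrr add0r scalerA mulVf ?mulf_neq0 ?scale1r.
Qed.

Lemma qform_fund_inv_dF : qform fund_inv_mx dF = 1.
Proof.
by rewrite /qform -mulmxA fund_inv_dF -scalemxAr mxE mul_row_tr00 dotv_dF_l mulVf.
Qed.

Lemma qform_fund_inv_xorth : qform fund_inv_mx xorth = xorth_ginv2.
Proof.
rewrite /qform -mulmxA fund_inv_xorth -scalemxAr mulmxBr -scalemxAr !mul_row_tr.
by rewrite !mxE eqxx !mulr1n dotv_xorth_l mulr0 subr0 mulrC.
Qed.

Lemma proj_fund_inv_xorth :
  proj_mx *m (fund_inv_mx *m xorth^T) = (p0 * cB)^-1 *: xorth^T.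
Proof.
by rewrite fund_inv_xorth -scalemxAr mulmxBr -scalemxAr proj_mx_xorth proj_mx_l scaler0 subr0.
Qed.

Lemma trace_fund_inv_fund :
  n%:R = 1 + p0 * kap * \tr (fund_inv_mx *m proj_mx) + p0 * p2 * xorth_ginv2.
Proof.
rewrite -mxtrace1 -(mulVmx fund_unit) -/fund_inv_mx /fund_mx mulmxDr mxtraceD.
rewrite /angular_mx -scalemxAr mxtraceZ (mulmxDr fund_inv_mx (kap *: _)) mxtraceD.
rewrite -!scalemxAr !mxtraceZ !mulmxA (mxtrace_mulC _ xorth) (mxtrace_mulC _ dF).
rewrite !mulmxA !trace_mx11 -[(dF *m _ *m _) 0 0]/(qform _ _).
rewrite -[(xorth *m _ *m _) 0 0]/(qform _ _) qform_fund_inv_dF qform_fund_inv_xorth.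
ring.
Qed.

Lemma mcartanE i : mcartan i = mcartan_scale * xorth 0 i.
Proof.
have E1 : \sum_(j < n) \sum_(k < n) fund_inv_mx j k * (proj_mx i j * xorth 0 k)
          = xorth 0 i / (p0 * cB).
  by rewrite contract_mx_row proj_fund_inv_xorth mxE [xorth^T i 0]mxE mulrC.
have E2 : \sum_(j < n) \sum_(k < n) fund_inv_mx j k * proj_mx j k
          = \tr (fund_inv_mx *m proj_mx).
  by rewrite contract_mx tr_proj_mx.
have E3 : \sum_(j < n) \sum_(k < n) fund_inv_mx j k * (proj_mx k i * xorth 0 j)
          = xorth 0 i / (p0 * cB).
  rewrite exchange_big -E1; apply: eq_bigr => j _; apply: eq_bigr => k _.
  by rewrite proj_mxC -{1}tr_fund_inv_mx mxE.
have E4 : \sum_(j < n) \sum_(k < n) fund_inv_mx j k * (xorth 0 j * xorth 0 k) = xorth_ginv2.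
  rewrite -qform_fund_inv_xorth qformE.
  by apply: eq_bigr => j _; apply: eq_bigr => k _; rewrite mulrA.
rewrite /mcartan (eq_bigr (fun j => \sum_(k < n)
   (cA / (2 * u) * (fund_inv_mx j k * (proj_mx i j * xorth 0 k))
    + cA * xorth 0 i / (2 * u) * (fund_inv_mx j k * proj_mx j k)
    + cA / (2 * u) * (fund_inv_mx j k * (proj_mx k i * xorth 0 j))
    + cG * xorth 0 i / (2 * u) * (fund_inv_mx j k * (xorth 0 j * xorth 0 k))))); last first.
  by move=> j _; apply: eq_bigr => k _; rewrite /cartan_t; ring.
under eq_bigr do rewrite !big_split /= -!mulr_sumr.
by rewrite !big_split /= -!mulr_sumr E1 E2 E3 E4 /mcartan_scale; ring.
Qed.

Lemma mcartan_norm2E : mcartan_norm2 = mcartan_scale ^+ 2 * xorth_ginv2.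
Proof.
rewrite -qform_fund_inv_xorth qformE mulr_sumr; apply: eq_bigr => i _.
by rewrite mulr_sumr; apply: eq_bigr => j _; rewrite !mcartanE; ring.
Qed.

(* [kap] must be invertible to solve the trace identity for tr(g^-1 proj_mx). *)
Hypotheses (u_neq0 : u != 0) (kap_neq0 : kap != 0).

Lemma mcartan_scaleE : mcartan_scale = cD / (2 * u * p0 * cB * kap).
Proof.
have trE : \tr (fund_inv_mx *m proj_mx) = (n%:R - 1 - p0 * p2 * xorth_ginv2) / (p0 * kap).
  by rewrite trace_fund_inv_fund; field; rewrite kap_neq0 p0_neq0.
rewrite /mcartan_scale trE /xorth_ginv2 /cD /cA /cB /cE /cG.
by field; rewrite kap_neq0 cB_neq0 p0_neq0 u_neq0.
Qed.

Theorem cartan_t_decomposition i j k : mcartan_norm2 != 0 ->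
  cartan_t i j k =
    cP / n.+1%:R * (angular_mx i j * mcartan k + angular_mx j k * mcartan i
                    + angular_mx k i * mcartan j)
    + cQ / mcartan_norm2 * (mcartan i * mcartan j * mcartan k).
Proof.
rewrite mcartan_norm2E => norm2_neq0.
have scale_neq0 : mcartan_scale != 0.
  by apply: contraNneq norm2_neq0 => ->; rewrite expr0n mul0r.
have ginv2_neq0 : xorth_ginv2 != 0 by apply: contraNneq norm2_neq0 => ->; rewrite mulr0.
have xorth2_neq0 : xorth2 != 0.
  by apply: contraNneq ginv2_neq0; rewrite /xorth_ginv2 => ->; rewrite mul0r.
have cD_neq0 : cD != 0.
  by apply: contraNneq scale_neq0 => cD0; rewrite mcartan_scaleE cD0 mul0r.
have cDp0E : n.+1%:R * cA * cB * p0 + xorth2 * cE * p0 ^+ 2 = cD * p0.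
  by rewrite /cD; ring.
have nS : 1 + n%:R = n.+1%:R :> R by rewrite addrC natr1.
rewrite !mcartanE !angular_mxE mcartan_scaleE /cartan_t /xorth_ginv2.
rewrite /cP /cQ /cD /cA /cE /cG; field.
rewrite nS -[kap * p1 - _]/cA -[kap * p3 + _]/cE -[_ + xorth2 * cE * p0]/cD.
by rewrite kap_neq0 cB_neq0 p0_neq0 u_neq0 xorth2_neq0 cDp0E mulf_neq0 // cD_neq0 pnatr_eq0.
Qed.

End SphericalTensors.

Section SphericalPositivity.
Variables (R : realFieldType) (n : nat) (l x : 'rV[R]_n) (s p0 p1 p2 : R).
Local Notation w := (xorth l x s).
Local Notation g := (fund_mx l x s p0 p1 p2).
Hypotheses (l_unit : dotv l l = 1) (xl : dotv x l = s).
Hypothesis fund_pd : forall v, v != 0 -> 0 < qform g v.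
Hypothesis p0_gt0 : 0 < p0.

Lemma fund_mx_unit : g \in unitmx.
Proof. by apply: qform_neq0_unitmx => v /fund_pd /lt0r_neq0. Qed.

Lemma dotv_dF v : dotv (dF l x s p0 p1) v = p0 * dotv l v + p1 * dotv w v.
Proof. by rewrite dotvDl !dotvZl. Qed.

Let wl : dotv w l = 0 := dotv_xorth_l l_unit xl.

Lemma cB_gt0 : w != 0 -> 0 < cB l x s p0 p1 p2.
Proof.
move=> w_neq0; have w2_gt0 := dotv_gt0 w_neq0.
pose c := p1 * xorth2 l x s / p0; pose v := w - c *: l.
have wv : dotv w v = xorth2 l x s by rewrite dotvBr dotvZr wl mulr0 subr0.
have lv : dotv l v = - c by rewrite dotvBr dotvZr l_unit dotvC wl; ring.
have vv : dotv v v = xorth2 l x s + c ^+ 2.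
  by rewrite {1}/v dotvBl dotvZl wv lv; ring.
have v_neq0 : v != 0.
  by apply: contraTneq w2_gt0 => v0; rewrite -[dotv w w]wv v0 dotv0r ltxx.
have qv : qform g v = p0 * xorth2 l x s * cB l x s p0 p1 p2.
  rewrite qform_fund_mx dotv_dF wv lv vv /c /cB.
  by field; rewrite lt0r_neq0.
by have := fund_pd v_neq0; rewrite qv pmulr_rgt0 // mulr_gt0.
Qed.

Lemma kap_gt0 v : w = 0 -> v != 0 -> dotv l v = 0 -> 0 < kap s p0 p1.
Proof.
move=> w0 v_neq0 lv; have := fund_pd v_neq0.
rewrite qform_fund_mx dotv_dF lv w0 dotvC dotv0r !(mulr0, expr0n, addr0, subr0) /=.
by rewrite add0r pmulr_rgt0 // pmulr_lgt0 // dotv_gt0.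
Qed.

End SphericalPositivity.

(** * Directional derivatives *)

Section PointwiseDerive.
Variables (R : numFieldType) (V : normedModType R).
Implicit Types (f g : V -> R) (z v : V).

Lemma is_derive_const (c : R) z v : is_derive z v (fun _ => c) 0.
Proof. exact: (@is_derive_cst R V R c z v). Qed.

Lemma is_derive_add f g z v df dg : is_derive z v f df -> is_derive z v g dg ->
  is_derive z v (fun t => f t + g t) (df + dg).
Proof. exact: (@is_deriveD R V R f g z v df dg). Qed.

Lemma is_derive_sub f g z v df dg : is_derive z v f df -> is_derive z v g dg ->
  is_derive z v (fun t => f t - g t) (df - dg).
Proof. exact: (@is_deriveB R V R f g z v df dg). Qed.

Lemma is_derive_mul f g z v df dg : is_derive z v f df -> is_derive z v g dg ->
  is_derive z v (fun t => f t * g t) (f z * dg + g z * df).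
Proof. exact: (@is_deriveM R V f g z v df dg). Qed.

Lemma is_derive_inv f z v df : f z != 0 -> is_derive z v f df ->
  is_derive z v (fun t => (f t)^-1) (- df / f z ^+ 2).
Proof.
move=> fz0 fdf; have fd := @ex_derive _ _ _ _ _ _ _ fdf.
apply: DeriveDef; first exact: derivableV.
by rewrite deriveV // derive_val scaleNr mulNr; congr (- _); exact: mulrC.
Qed.

End PointwiseDerive.
Arguments is_derive_add {R V f g z v df dg}.
Arguments is_derive_sub {R V f g z v df dg}.
Arguments is_derive_mul {R V f g z v df dg}.
Arguments is_derive_inv {R V f z v df}.

Section ChainRule.
Variables (R : realType) (V : normedModType R).

Lemma is_derive_comp (g : R -> R) (h : V -> R) z v dg dh :
  is_derive (h z) 1 g dg -> differentiable h z -> is_derive z v h dh ->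
  is_derive z v (fun t => g (h t)) (dg * dh).
Proof.
move=> gdg hz hdh.
have gh : differentiable g (h z) by apply/derivable1_diffP; exact: ex_derive.
have ghz : differentiable (g \o h) z by exact: differentiable_comp.
apply: DeriveDef; first exact: diff_derivable.
rewrite (deriveE _ ghz) diff_comp //= -(deriveE _ hz) derive_val.
by rewrite diff1E // derive1E derive_val mulrC.
Qed.

Lemma is_derive_comp_snd (g : R * R -> R) (c : R) (h : V -> R) z v dh :
  differentiable g (c, h z) -> differentiable h z -> is_derive z v h dh ->
  is_derive z v (fun t => g (c, h t)) ('D_((0 : R), (1 : R)) g (c, h z) * dh).
Proof.
move=> gz hz hdh.
have pz : differentiable (fun t => (c, h t)) z.
  by apply: differentiable_pair => //; exact: differentiable_cst.
have gpz : differentiable (g \o (fun t => (c, h t))) z by exact: differentiable_comp.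
apply: DeriveDef; first exact: diff_derivable.
rewrite (deriveE _ gpz) diff_comp //= (diff_pair (differentiable_cst c z) hz) diff_cst /=.
rewrite -(deriveE _ hz) derive_val (deriveE _ gz).
have -> : ((0 : R), dh) = dh *: ((0 : R), (1 : R)).
  by apply/pair_equal_spec; split; rewrite /GRing.scale /= ?mulr0 ?mulr1.
by rewrite linearZ /= mulrC.
Qed.

End ChainRule.

Section RowDerive.
Variables (R : realType) (n : nat).
Implicit Types (c z v : 'rV[R]_n).

Lemma edotE : @edot R n = @dotv R n.
Proof. by []. Qed.

Lemma edot_ebasis c k : edot c (ebasis R k) = c 0 k.
Proof.
rewrite /edot (bigD1 k) //= big1 ?addr0; first by rewrite mxE eqxx mulr1.
by move=> j jk; rewrite mxE eq_sym (negbTE jk) mulr0.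
Qed.

Lemma is_derive_coord z v i : is_derive z v (fun t : 'rV[R]_n => t 0 i) (v 0 i).
Proof.
have coord_lin : linear (fun t : 'rV[R]_n => t 0 i) by move=> a p q; rewrite !mxE.
pose coord : {linear 'rV[R]_n -> R} := HB.pack (fun t : 'rV[R]_n => t 0 i)
  (GRing.isLinear.Build _ _ _ _ _ coord_lin).
have coord_cont : continuous coord by exact: coord_continuous.
have coord_diff : differentiable coord z by exact: linear_differentiable.
apply: DeriveDef; first exact: diff_derivable.
by rewrite (deriveE _ coord_diff) diff_lin.
Qed.

Lemma edot_sum c : edot c = \sum_(i < n) (fun t : 'rV[R]_n => c 0 i * t 0 i).
Proof. by rewrite fct_sumE; apply/funext. Qed.

Lemma is_derive_edot c z v : is_derive z v (edot c) (edot c v).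
Proof.
rewrite [X in is_derive _ _ X _]edot_sum; apply: is_derive_sum => i.
apply: is_derive_eq.
  exact: is_derive_mul (is_derive_const _ _ _) (is_derive_coord _ _ _).
by rewrite /= mulr0 addr0.
Qed.

Lemma differentiable_edot c z : differentiable (edot c) z.
Proof.
rewrite edot_sum; apply: differentiable_sum => i.
by apply: differentiableM; [exact: differentiable_cst|exact: differentiable_coord].
Qed.

Lemma edot_self_sum :
  (fun t => edot t t) = \sum_(i < n) (fun t : 'rV[R]_n => t 0 i * t 0 i).
Proof. by rewrite fct_sumE; apply/funext. Qed.

Lemma is_derive_edot_self z v : is_derive z v (fun t => edot t t) (2 * edot z v).
Proof.
rewrite edot_self_sum; apply: is_derive_eq.
  by apply: is_derive_sum => i; apply: is_derive_mul; exact: is_derive_coord.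
by rewrite /edot mulr_sumr; apply: eq_bigr => i _; ring.
Qed.

Lemma differentiable_edot_self z : differentiable (fun t => edot t t) z.
Proof.
rewrite edot_self_sum; apply: differentiable_sum => i.
by apply: differentiableM; exact: differentiable_coord.
Qed.

Lemma enorm_ge0 z : 0 <= enorm z.
Proof. exact: sqrtr_ge0. Qed.

Lemma enorm_gt0 z : z != 0 -> 0 < enorm z.
Proof. by move=> z0; rewrite sqrtr_gt0 dotv_gt0. Qed.

Lemma enorm_neq0 z : z != 0 -> enorm z != 0.
Proof. by move=> z0; rewrite gt_eqF ?enorm_gt0. Qed.

Lemma enorm_sqr z : enorm z ^+ 2 = dotv z z.
Proof. by rewrite sqr_sqrtr // dotv_ge0. Qed.

Lemma is_derive_enorm z v : z != 0 -> is_derive z v (@enorm R n) (edot z v / enorm z).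
Proof.
move=> z0; have zz_gt0 : 0 < edot z z := dotv_gt0 z0.
apply: (is_derive_eq (@is_derive_comp _ _ Num.sqrt (fun t => edot t t) z v _ _
  (is_derive1_sqrt zz_gt0) (differentiable_edot_self z) (is_derive_edot_self z v))).
by rewrite /enorm; field; rewrite gt_eqF ?sqrtr_gt0.
Qed.

Lemma differentiable_enorm z : z != 0 -> differentiable (@enorm R n) z.
Proof.
move=> z0; have zz_gt0 : 0 < edot z z := dotv_gt0 z0.
have sqrt_diff : differentiable (@Num.sqrt R) (edot z z).
  apply/derivable1_diffP; exact: (@ex_derive _ _ _ _ _ _ _ (is_derive1_sqrt zz_gt0)).
exact: (differentiable_comp (differentiable_edot_self z) sqrt_diff).
Qed.

Lemma is_derive_coord_e z i k :
  is_derive z (ebasis R k) (fun t : 'rV[R]_n => t 0 i) (i == k)%:R.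
Proof. by have := is_derive_coord z (ebasis R k) i; rewrite mxE eq_sym. Qed.

Lemma is_derive_enorm_e z k : z != 0 ->
  is_derive z (ebasis R k) (@enorm R n) (z 0 k / enorm z).
Proof. by move=> z0; rewrite -edot_ebasis; exact: is_derive_enorm. Qed.

Lemma is_derive_inv_enorm_e z k : z != 0 ->
  is_derive z (ebasis R k) (fun t => (enorm t)^-1) (- (z 0 k / enorm z) / enorm z ^+ 2).
Proof. by move=> z0; apply: is_derive_inv; [exact: enorm_neq0|exact: is_derive_enorm_e]. Qed.

End RowDerive.

Lemma itv_gt0_critical (R : realType) (f : R -> R) (a b : R) : a <= b ->
  (forall t, t \in `[a, b] -> derivable f t 1) -> 0 < f a -> 0 < f b ->
  (forall c, c \in `]a, b[ -> is_derive c 1 f 0 -> 0 < f c) ->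
  forall t, t \in `[a, b] -> 0 < f t.
Proof.
move=> ab fd fa fb fcrit.
have fcont : {within `[a, b], continuous f}.
  apply: continuous_in_subspaceT => t /[!inE] tab.
  exact/differentiable_continuous/derivable1_diffP/fd.
have [c cab cmin] := EVT_min ab fcont.
suff fc : 0 < f c by move=> t /cmin; exact: lt_le_trans.
have [->|ca] := eqVneq c a; first exact: fa.
have [->|cb] := eqVneq c b; first exact: fb.
have cab' : c \in `]a, b[ by rewrite in_itv /= !lt_def ca eq_sym cb !(itvP cab).
apply: fcrit (cab') _; apply: derive1_at_min ab _ cab' _ => t tab.
  by apply: fd; exact: subset_itv_oo_cc.
by apply: cmin; exact: subset_itv_oo_cc.
Qed.

(** * The metric |y| phi(|x|, <x, y>/|y|) *)

Section SphericalMetric.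
Variables (R : realType) (n : nat) (phi : R * R -> R) (x : 'rV[R]_n) (W : set (R * R)).
Hypothesis phi_smooth : smooth_on W phi.
Hypothesis W_s : forall z, z != 0 -> W (enorm x, edot x z / enorm z).
Implicit Types (z : 'rV[R]_n) (i j k : 'I_n).

Definition sph_s z := edot x z / enorm z.
Definition sph_dir z := (enorm z)^-1 *: z.

(* The m-th s-derivative of phi at (|x|, s(z)); [phi_at 1] and [phi_at 2] are
   convertible to [phi_s phi] and [phi_ss phi]. *)
Definition phi_at (m : nat) z := Dseq (nseq m ((0 : R), (1 : R))) phi (enorm x, sph_s z).

(* Entries of [sph_dir], [xorth], [dF] and [fund_mx] at z, and the derivative
   [ddFc] of [dFc], written out so that [derive_rule] can differentiate them. *)
Definition dirc z i := z 0 i / enorm z.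
Definition xorthc z i := x 0 i - sph_s z * dirc z i.
Definition dFc i z := phi_at 0 z * dirc z i + phi_at 1 z * xorthc z i.
Definition ddFc i j z :=
  ((phi_at 0 z - sph_s z * phi_at 1 z) * ((i == j)%:R - dirc z i * dirc z j)
   + phi_at 2 z * (xorthc z i * xorthc z j)) / enorm z.
Definition fundc i j z := dFc i z * dFc j z + enorm z * phi_at 0 z * ddFc i j z.

Lemma is_derive_sph_s_e z k : z != 0 ->
  is_derive z (ebasis R k) sph_s (xorthc z k / enorm z).
Proof.
move=> z0; have nz := enorm_neq0 z0; apply: is_derive_eq.
  exact: is_derive_mul (is_derive_edot _ _ _) (is_derive_inv_enorm_e k z0).
by rewrite edot_ebasis /xorthc /sph_s /dirc; field.
Qed.

Lemma differentiable_sph_s z : z != 0 -> differentiable sph_s z.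
Proof.
move=> z0; apply: differentiableM; first exact: differentiable_edot.
by apply: differentiableV; [exact: differentiable_enorm|exact: enorm_neq0].
Qed.

Lemma is_derive_phi_at_e m z k : z != 0 ->
  is_derive z (ebasis R k) (phi_at m) (phi_at m.+1 z * (xorthc z k / enorm z)).
Proof.
move=> z0; apply: is_derive_comp_snd (differentiable_sph_s z0) (is_derive_sph_s_e k z0).
exact: phi_smooth (W_s z0).
Qed.

(* [is_derive_sub] is tried before [is_derive_add] since [a - b] is also [a + - b]. *)
Ltac derive_rule z0 := first
  [ apply: is_derive_const
  | apply: is_derive_coord_e
  | apply: (is_derive_enorm_e _ z0)
  | apply: (is_derive_inv_enorm_e _ z0)
  | apply: (is_derive_sph_s_e _ z0)
  | apply: (is_derive_phi_at_e _ _ z0)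
  | apply: is_derive_mul
  | apply: is_derive_sub
  | apply: is_derive_add ].

Lemma is_derive_sph_metric z k : z != 0 ->
  is_derive z (ebasis R k) (sph_metric phi x) (dFc k z).
Proof.
move=> z0; have nz := enorm_neq0 z0.
rewrite (_ : sph_metric phi x = fun t => enorm t * phi_at 0 t) //.
apply: is_derive_eq; first by repeat derive_rule z0.
by rewrite /dFc /xorthc /dirc; field.
Qed.

Lemma is_derive_dFc z i k : z != 0 -> is_derive z (ebasis R k) (dFc i) (ddFc i k z).
Proof.
move=> z0; have nz := enorm_neq0 z0.
apply: is_derive_eq; first by rewrite /dFc /xorthc /dirc; repeat derive_rule z0.
by rewrite /ddFc /xorthc /dirc; field.
Qed.

Lemma is_derive_fundc z i j k : z != 0 ->
  is_derive z (ebasis R k) (fundc i j) (2 * cartan_t (sph_dir z) x (sph_s z) (enorm z)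
    (phi_at 0 z) (phi_at 1 z) (phi_at 2 z) (phi_at 3 z) i j k).
Proof.
move=> z0; have nz := enorm_neq0 z0.
apply: is_derive_eq.
  by rewrite /fundc /dFc /ddFc /xorthc /dirc; repeat derive_rule z0.
rewrite /cartan_t [proj_mx _ k i]proj_mxC /cA /cG /kap !proj_mxE !mxE /xorthc /dirc.
by field.
Qed.

Local Notation fund_at z :=
  (fund_mx (sph_dir z) x (sph_s z) (phi_at 0 z) (phi_at 1 z) (phi_at 2 z)).
Local Notation angular_at z :=
  (angular_mx (sph_dir z) x (sph_s z) (phi_at 0 z) (phi_at 1 z) (phi_at 2 z)).
Local Notation cartan_at z := (cartan_t (sph_dir z) x (sph_s z) (enorm z)
  (phi_at 0 z) (phi_at 1 z) (phi_at 2 z) (phi_at 3 z)).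

Lemma near_neq0 z : z != 0 -> \forall w \near z, w != 0.
Proof. exact: cvgr_neq0 cvg_id. Qed.

Lemma pd_sph_metric z i : z != 0 -> pd (sph_metric phi x) i z = dFc i z.
Proof. by move=> z0; apply: derive_val; exact: is_derive_sph_metric. Qed.

Lemma fund_sph_metric z i j : z != 0 -> fund (sph_metric phi) x z i j = fundc i j z.
Proof.
move=> z0; have F2_near : \forall w \near z,
    pd (fun v => sph_metric phi x v ^+ 2) i w = 2 * sph_metric phi x w * dFc i w.
  near=> w; apply: derive_val; apply: is_derive_eq.
    by apply: is_derive_mul; apply: is_derive_sph_metric; near: w; exact: near_neq0.
  by rewrite /GRing.scale /=; ring.
have dF2 : is_derive z (ebasis R j) (fun w => 2 * sph_metric phi x w * dFc i w)
    (2 * fundc i j z).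
  apply: is_derive_eq.
    apply: is_derive_mul (is_derive_dFc i j z0).
    exact: is_derive_mul (is_derive_const _ _ _) (is_derive_sph_metric j z0).
  by rewrite /fundc -[sph_metric phi x z]/(enorm z * phi_at 0 z); ring.
rewrite /fund /pd (near_eq_derive _ F2_near) (@derive_val _ _ _ _ _ _ _ dF2).
by rewrite mulrA mulVf ?mul1r // pnatr_eq0.
Unshelve. all: by end_near. Qed.

Lemma fundcE z i j : z != 0 -> fundc i j z = fund_at z i j.
Proof.
move=> z0; have nz := enorm_neq0 z0.
rewrite fund_mxE angular_mxE proj_mxE !mxE /fundc /dFc /ddFc /xorthc /dirc /kap.
by field.
Qed.

Lemma cartan_sph_metric z i j k : z != 0 ->
  cartan (sph_metric phi) x z i j k = cartan_at z i j k.
Proof.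
move=> z0; have fund_near : \forall w \near z, fund (sph_metric phi) x w i j = fundc i j w.
  by near=> w; apply: fund_sph_metric; near: w; exact: near_neq0.
rewrite /cartan /pd (near_eq_derive _ fund_near).
rewrite (@derive_val _ _ _ _ _ _ _ (is_derive_fundc i j k z0)).
by rewrite mulrA mulVf ?mul1r // pnatr_eq0.
Unshelve. all: by end_near. Qed.

Lemma angular_sph_metric z i j : z != 0 ->
  angular (sph_metric phi) x z i j = angular_at z i j.
Proof.
move=> z0; have nz := enorm_neq0 z0.
rewrite /angular fund_sph_metric // !pd_sph_metric // angular_mxE proj_mxE !mxE.
by rewrite /fundc /ddFc /xorthc /dirc /kap; field.
Qed.

Local Notation mcartan_at z := (mcartan (sph_dir z) x (sph_s z) (enorm z)
  (phi_at 0 z) (phi_at 1 z) (phi_at 2 z) (phi_at 3 z)).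

Lemma fund_inv_sph_metric z : z != 0 ->
  fund_inv (sph_metric phi) x z = invmx (fund_at z).
Proof.
move=> z0; congr invmx; apply/matrixP => i j.
by rewrite mxE fund_sph_metric // fundcE.
Qed.

Lemma mean_cartan_sph_metric z i : z != 0 ->
  mean_cartan (sph_metric phi) x z i = mcartan_at z i.
Proof.
move=> z0; rewrite /mean_cartan fund_inv_sph_metric //.
by apply: eq_bigr => j _; apply: eq_bigr => k _; rewrite cartan_sph_metric.
Qed.

Lemma mean_cartan_norm2_sph_metric z : z != 0 ->
  mean_cartan_norm2 (sph_metric phi) x z =
  mcartan_norm2 (sph_dir z) x (sph_s z) (enorm z)
    (phi_at 0 z) (phi_at 1 z) (phi_at 2 z) (phi_at 3 z).
Proof.
move=> z0; rewrite /mean_cartan_norm2 fund_inv_sph_metric //.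
by apply: eq_bigr => i _; apply: eq_bigr => j _; rewrite !mean_cartan_sph_metric.
Qed.

End SphericalMetric.

Section SphericalFinsler.
Variables (R : realType) (n : nat) (phi : R * R -> R) (x : 'rV[R]_n) (W : set (R * R)).
Implicit Types (y z e v : 'rV[R]_n).
Hypothesis phi_smooth : smooth_on W phi.
Hypothesis W_s : forall z, z != 0 -> W (enorm x, edot x z / enorm z).
Hypothesis F_gt0 : forall z, z != 0 -> 0 < sph_metric phi x z.
Hypothesis F_pd : forall z v, z != 0 -> v != 0 ->
  0 < \sum_(i < n) \sum_(j < n) fund (sph_metric phi) x z i j * v 0 i * v 0 j.

Local Notation r := (enorm x).
Local Notation s := (sph_s x).
Local Notation P m := (phi_at phi x m).
Local Notation w z := (xorth (sph_dir z) x (s z)).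

Lemma sph_dir_unit z : z != 0 -> dotv (sph_dir z) (sph_dir z) = 1.
Proof.
move=> z0; rewrite dotvZl dotvZr mulrA -expr2 exprVn -enorm_sqr.
by rewrite mulVf // expf_neq0 // enorm_neq0.
Qed.

Lemma x_sph_dir z : dotv x (sph_dir z) = s z.
Proof. by rewrite dotvZr mulrC. Qed.

Lemma phi_at0_gt0 z : z != 0 -> 0 < P 0 z.
Proof. by move=> z0; have := F_gt0 z0; rewrite pmulr_rgt0 ?enorm_gt0. Qed.

Lemma fund_at_pd z : z != 0 -> forall v, v != 0 ->
  0 < qform (fund_mx (sph_dir z) x (s z) (P 0 z) (P 1 z) (P 2 z)) v.
Proof.
move=> z0 v v0; rewrite qformE; have := F_pd z0 v0.
by under eq_bigr do under eq_bigr do rewrite (fund_sph_metric phi_smooth W_s) // fundcE //.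
Qed.

Lemma xorth2_sph z : z != 0 -> xorth2 (sph_dir z) x (s z) = r ^+ 2 - s z ^+ 2.
Proof. by move=> z0; rewrite xorth2E ?sph_dir_unit ?x_sph_dir ?enorm_sqr. Qed.

(* The witness is t x + sqrt(r^2 - t^2) e' with e' orthogonal to x and of
   length r; its norm is r^2. *)
Lemma sph_s_range e : 0 < r -> e != 0 -> dotv x e = 0 ->
  forall t, -r <= t <= r -> exists2 z, z != 0 & s z = t.
Proof.
move=> r_gt0 e0 xe t /andP[tr1 tr2].
have r0 : r != 0 by rewrite gt_eqF.
have [e' e'e' xe'] : exists2 e', dotv e' e' = r ^+ 2 & dotv x e' = 0.
  have ne0 := enorm_neq0 e0.
  exists ((r / enorm e) *: e); first by rewrite dotvZl dotvZr -enorm_sqr; field.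
  by rewrite dotvZr xe mulr0.
have q2 : Num.sqrt (r ^+ 2 - t ^+ 2) ^+ 2 = r ^+ 2 - t ^+ 2.
  by rewrite sqr_sqrtr // subr_ge0; nra.
move: (Num.sqrt _) q2 => c c2.
have zz : dotv (t *: x + c *: e') (t *: x + c *: e') = (r ^+ 2) ^+ 2.
  rewrite dotvDl !dotvDr !dotvZl !dotvZr (dotvC e' x) xe' e'e' -enorm_sqr.
  by rewrite [c * (c * _)]mulrA -expr2 c2; ring.
have nz : enorm (t *: x + c *: e') = r ^+ 2.
  by rewrite /enorm edotE zz sqrtr_sqr ger0_norm // exprn_ge0 // ltW.
exists (t *: x + c *: e').
  apply: contra_neq (expf_neq0 2 r0) => z0.
  by rewrite -nz z0 /enorm edotE dotv0r sqrtr0.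
by rewrite /sph_s nz edotE dotvDr !dotvZr xe' -enorm_sqr; field.
Qed.

Lemma is_derive_kap t : (exists2 z, z != 0 & s z = t) ->
  is_derive t 1 (fun t => kap t (phi (r, t)) (phi_s phi (r, t)))
    (- (t * phi_ss phi (r, t))).
Proof.
move=> [z z0 <-]; have Wz := W_s z0.
have d0 : differentiable phi (r, s z) := phi_smooth [::] Wz.
have d1 : differentiable (phi_s phi) (r, s z) := phi_smooth [:: ((0 : R), (1 : R))] Wz.
have hid : is_derive (s z) 1 (fun u : R => u) 1 := is_derive_id _ _.
have did : differentiable (fun u : R => u) (s z).
  by apply/derivable1_diffP; exact: derivable_id.
have dphi := is_derive_comp_snd (h := fun u : R => u) d0 did hid.
have dphi_s := is_derive_comp_snd (h := fun u : R => u) d1 did hid.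
rewrite /kap; apply: is_derive_eq.
by rewrite /phi_ss /phi_s -![_ *: _]/(_ * _) !mulr1; ring.
Qed.

Lemma kap_parallel_gt0 z e : z != 0 -> s z != 0 -> w z = 0 ->
  e != 0 -> dotv x e = 0 -> 0 < kap (s z) (P 0 z) (P 1 z).
Proof.
move=> z0 sz0 w0 e0 xe.
apply: (kap_gt0 (fund_at_pd z0) (phi_at0_gt0 z0) w0 e0).
move/eqP: w0; rewrite subr_eq0 => /eqP xE.
by apply/eqP; rewrite -(mulrI_eq0 _ (lregP sz0)) -dotvZl -xE xe.
Qed.

Lemma kap_range_gt0 e : 0 < r -> e != 0 -> dotv x e = 0 ->
  forall t, -r <= t <= r -> 0 < kap t (phi (r, t)) (phi_s phi (r, t)).
Proof.
move=> r_gt0 e0 xe t tr; have onto := sph_s_range r_gt0 e0 xe.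
have end_gt0 t' : t' ^+ 2 = r ^+ 2 -> -r <= t' <= r ->
    0 < kap t' (phi (r, t')) (phi_s phi (r, t')).
  move=> tr2 /onto [z z0 szt]; rewrite -szt.
  have w0 : w z = 0.
    by apply/eqP; rewrite -dotv_eq0 -/(xorth2 _ _ _) xorth2_sph // szt tr2 subrr.
  apply: (kap_parallel_gt0 z0 _ w0 e0 xe); rewrite szt.
  by apply: contra_eq_neq tr2 => ->; rewrite expr0n /= eq_sym expf_neq0 ?gt_eqF.
apply: (@itv_gt0_critical _ (fun t => kap t (phi (r, t)) (phi_s phi (r, t))) (- r) r);
  rewrite ?in_itv //=.
- by lra.
- by move=> u /onto/is_derive_kap dk; exact: (@ex_derive _ _ _ _ _ _ _ dk).
- by apply: end_gt0; [rewrite sqrrN|lra].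
- by apply: end_gt0; lra.
move=> c; rewrite in_itv /= => /andP[c1 c2] dc0.
have [z z0 szc] := onto c (ltac:(by rewrite !ltW)).
have dc := is_derive_kap (ex_intro2 _ _ z z0 szc).
have /eqP := @derive_val _ _ _ _ _ _ _ dc; rewrite (@derive_val _ _ _ _ _ _ _ dc0).
rewrite eq_sym oppr_eq0 mulf_eq0 => /orP[/eqP c0|/eqP phi_ss0].
  have := phi_at0_gt0 z0.
  by rewrite -[phi_at _ _ 0 z]/(phi (r, s z)) szc c0 /kap mul0r subr0.
have w_neq0 : w z != 0.
  by rewrite -dotv_eq0 -/(xorth2 _ _ _) xorth2_sph // szc subr_eq0 gt_eqF //; nra.
have := cB_gt0 (sph_dir_unit z0) (x_sph_dir z) (fund_at_pd z0) (phi_at0_gt0 z0) w_neq0.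
rewrite /cB -[P 2 z]/(phi_ss phi (r, s z)).
rewrite -[kap _ (P 0 z) (P 1 z)]/(kap (s z) (phi (r, s z)) (phi_s phi (r, s z))).
by rewrite szc phi_ss0 mulr0 addr0.
Qed.

Lemma kap_sph_gt0 y : y != 0 -> w y != 0 -> 0 < kap (s y) (P 0 y) (P 1 y).
Proof.
move=> y0 wy0; have w2_gt0 : 0 < r ^+ 2 - s y ^+ 2 by rewrite -xorth2_sph // dotv_gt0.
have r_gt0 : 0 < r by have := enorm_ge0 x; nra.
have xx0 : dotv x x != 0 by rewrite -enorm_sqr expf_neq0 // gt_eqF.
have [xe ee] := dotv_orth_proj y xx0.
have ny0 := enorm_neq0 y0.
apply: (kap_range_gt0 r_gt0 _ xe); last by apply/andP; split; nra.
rewrite -dotv_eq0 ee (_ : _ - _ = enorm y ^+ 2 * (r ^+ 2 - s y ^+ 2) / r ^+ 2).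
  apply/lt0r_neq0/divr_gt0; last by rewrite exprn_gt0.
  by rewrite mulr_gt0 // exprn_gt0 ?enorm_gt0.
by rewrite -!enorm_sqr /sph_s edotE; field; rewrite gt_eqF.
Qed.

Lemma cartan_sph_metric_decomposition y i j k : y != 0 ->
  mean_cartan_norm2 (sph_metric phi) x y != 0 ->
  let I := mean_cartan (sph_metric phi) x y in
  cartan (sph_metric phi) x y i j k =
    coefP n phi r (s y) / n.+1%:R *
      (angular (sph_metric phi) x y i j * I k + angular (sph_metric phi) x y j k * I i
       + angular (sph_metric phi) x y k i * I j)
    + coefQ n phi r (s y) / mean_cartan_norm2 (sph_metric phi) x y * (I i * I j * I k).
Proof.
move=> y0 norm2_neq0 I; rewrite /I !(mean_cartan_sph_metric phi_smooth W_s) //.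
rewrite !(angular_sph_metric phi_smooth W_s) // (cartan_sph_metric phi_smooth W_s) //.
rewrite (mean_cartan_norm2_sph_metric phi_smooth W_s) // in norm2_neq0 *.
have w_neq0 : w y != 0.
  by apply: contraNneq norm2_neq0 => w0; apply/eqP; exact: mcartan_norm2_xorth0.
have p0_gt0 := phi_at0_gt0 y0.
have fund_unit := fund_mx_unit (fund_at_pd y0).
have cB_pos := cB_gt0 (sph_dir_unit y0) (x_sph_dir y) (fund_at_pd y0) p0_gt0 w_neq0.
have := cartan_t_decomposition (sph_dir_unit y0) (x_sph_dir y) fund_unit
  (lt0r_neq0 p0_gt0) (lt0r_neq0 cB_pos) (enorm_neq0 y0)
  (lt0r_neq0 (kap_sph_gt0 y0 w_neq0)) i j k norm2_neq0.
by rewrite /cP /cQ /cB xorth2_sph.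
Qed.

End SphericalFinsler.

Unset Implicit Arguments. Set Strict Implicit.

Theorem corollary2 (R : realType) (n : nat) (U : set 'rV[R]_n)
  (phi : R * R -> R) (W : set (R * R)) :
  open U -> connected U -> U !=set0 ->
  open W ->
  (forall x y, U x -> y != 0 -> W (enorm x, edot x y / enorm y)) ->
  smooth_on W phi ->
  finsler_on (sph_metric phi) U ->
  forall (x y : 'rV[R]_n), U x -> y != 0 ->
  mean_cartan_norm2 (sph_metric phi) x y != 0 ->
  let F := sph_metric phi in
  let r := enorm x in
  let s := edot x y / enorm y in
  let I := mean_cartan F x y in
  forall i j k : 'I_n,
    cartan F x y i j k =
      coefP n phi r s / n.+1%:R *
        (angular F x y i j * I k + angular F x y j k * I i
         + angular F x y k i * I j)
      + coefQ n phi r s / mean_cartan_norm2 F x y * (I i * I j * I k).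
Proof.
move=> _ _ _ _ W_s phi_smooth [_ [F_gt0 [_ F_pd]]] x y Ux y0 norm2_neq0 F r s I i j k.
exact: (cartan_sph_metric_decomposition phi_smooth (fun z => W_s x z Ux)
  (fun z => F_gt0 x z Ux) (fun z v => F_pd x z v Ux) i j k y0 norm2_neq0).
Qed.
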